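(* Let $\mathcal{K}\subseteq\wp(\mathcal{G})$ be coherent. For finitely many $A_1,\ldots,A_n\in\mathcal{K}$ ($n\ge1$) let $\mathbb{D}_{\{A_1,\ldots,A_n\}}$ be the set of all coherent $D\subseteq\mathcal{G}$ for which there is $\langle g_1,\ldots,g_n\rangle\in A_1\times\cdots\times A_n$ with $0\notin\mathcal{E}(\{g_1,\ldots,g_n\})$ and $D\supseteq\mathcal{E}(\{g_1,\ldots,g_n\})$, and let $\mathfrak{D}_{\mathcal{K}}:=\{\mathbb{D}_{\{A_1,\ldots,A_n\}}: n\ge1,\ A_1,\ldots,A_n\in\mathcal{K}\}$. Then: $\mathfrak{D}_{\mathcal{K}}$ is non-empty; each of its members is a non-empty set of coherent sets of desirable gambles; $\mathbb{D}_{\{A^1_1,\ldots,A^1_{n_1},A^2_1,\ldots,A^2_{n_2}\}}\subseteq\mathbb{D}_{\{A^1_1,\ldots,A^1_{n_1}\}}\cap\mathbb{D}_{\{A^2_1,\ldots,A^2_{n_2}\}}$ (so $\mathfrak{D}_{\mathcal{K}}$ is downwards closed); and $\mathcal{K}=\mathcal{K}_{\mathfrak{D}_{\mathcal{K}}}$.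
   Context: $\Omega$ is a non-empty set and $\mathcal{G}$ is the set of bounded functions $\Omega\to\mathbb{R}$. $f\geq g$ means pointwise $\geq$; $f\gneq g$ means $f\geq g$ and $f\neq g$; $\mathcal{G}_{\gneq 0}=\{f: f\gneq 0\}$. $\mathrm{posi}(B)=\{\sum_{i=1}^m\lambda_i h_i: m\geq1,\lambda_i>0,h_i\in B\}$, and $\mathcal{E}(E):=\mathrm{posi}(E\cup\mathcal{G}_{\gneq 0})$. A set $D\subseteq\mathcal{G}$ is coherent if $0\notin D$; $\mathcal{G}_{\gneq0}\subseteq D$; $\lambda g\in D$ whenever $g\in D,\lambda>0$; and $f+g\in D$ whenever $f,g\in D$. A set $\mathcal{K}\subseteq\wp(\mathcal{G})$ is coherent if: (K$_\emptyset$) $\emptyset\notin\mathcal{K}$; (K$_0$) if $A\in\mathcal{K}$ then $A\setminus\{0\}\in\mathcal{K}$; (K$_{\gneq0}$) if $g\in\mathcal{G}_{\gneq0}$ then $\{g\}\in\mathcal{K}$; (K$_\supseteq$) if $A\in\mathcal{K}$ and $B\supseteq A$ then $B\in\mathcal{K}$; (K$_{\mathrm{Dom}}$) if $A\in\mathcal{K}$ and for each $g\in A$, $f_g$ is a gamble with $f_g\geq g$, then $\{f_g: g\in A\}\in\mathcal{K}$; (K$_{\mathrm{Add}}$) if $A_1,\ldots,A_n\in\mathcal{K}$ (finitely many) and for each $\langle g_1,\ldots,g_n\rangle\in A_1\times\cdots\times A_n$, $f_{\langle g_1,\ldots,g_n\rangle}$ is some member of $\mathrm{posi}(\{g_1,\ldots,g_n\})$,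 then $\{f_{\langle g_1,\ldots,g_n\rangle}\}\in\mathcal{K}$ (the set of all these). A set $\mathfrak{D}$ of sets of coherent $D$'s is downwards closed if for all $\mathbb{D}_1,\mathbb{D}_2\in\mathfrak{D}$ there is $\mathbb{D}\in\mathfrak{D}$ with $\mathbb{D}\subseteq\mathbb{D}_1\cap\mathbb{D}_2$. For such $\mathfrak{D}$, $\mathcal{K}_{\mathfrak{D}}:=\{B\subseteq\mathcal{G}:\exists\mathbb{D}\in\mathfrak{D}\ \forall D\in\mathbb{D},\ B\cap D\neq\emptyset\}$. *)

From Stdlib Require Import Reals List.
Import ListNotations.
Open Scope R_scope.
Set Implicit Arguments.

Section Gambles.
Variable Omega : Type.

Record gamble := Gamble {
  gf :> Omega -> R;
  gbounded : exists M : R, forall w, Rabs (gf w) <= M }.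

Definition gset := gamble -> Prop.

Definition gge (f g : gamble) : Prop := forall w, gf g w <= gf f w.

(* the zero gamble (identified extensionally) *)
Definition is_zero (f : gamble) : Prop := forall w, gf f w = 0.

Definition gpos (f : gamble) : Prop :=
  (forall w, 0 <= gf f w) /\ exists w, gf f w <> 0.

Definition lincomb (l : list (R * gamble)) (w : Omega) : R :=
  fold_right (fun p acc => fst p * gf (snd p) w + acc) 0 l.

Definition posi (B : gset) : gset := fun h =>
  exists l : list (R * gamble),
    l <> [] /\ Forall (fun p => 0 < fst p /\ B (snd p)) l /\
    forall w, gf h w = lincomb l w.

Definition Ecl (E : gset) : gset := posi (fun h => E h \/ gpos h).

Definition has_zero (D : gset) : Prop := exists h, D h /\ is_zero h.

Definition coherentD (D : gset) : Prop :=
  ~ has_zero D /\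
  (forall g, gpos g -> D g) /\
  (forall g lam h, D g -> 0 < lam -> (forall w, gf h w = lam * gf g w) -> D h) /\
  (forall f g h, D f -> D g -> (forall w, gf h w = gf f w + gf g w) -> D h).

Definition in_prod (As : list gset) (gs : list gamble) : Prop :=
  Forall2 (fun (A : gset) g => A g) As gs.

Definition lset (gs : list gamble) : gset := fun h => In h gs.

Definition coherentK (K : gset -> Prop) : Prop :=
  (* K_empty *)
  ~ K (fun _ => False) /\
  (* K_0 *)
  (forall A, K A -> K (fun g => A g /\ ~ is_zero g)) /\
  (* K_{⪈0} *)
  (forall g, gpos g -> K (fun h => h = g)) /\
  (* K_⊇ *)
  (forall A B : gset, K A -> (forall g, A g -> B g) -> K B) /\
  (* K_Dom *)
  (forall (A : gset) (F : gamble -> gamble), K A ->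
     (forall g, A g -> gge (F g) g) ->
     K (fun h => exists g, A g /\ h = F g)) /\
  (* K_Add *)
  (forall (As : list gset) (F : list gamble -> gamble),
     As <> [] -> Forall K As ->
     (forall gs, in_prod As gs -> posi (lset gs) (F gs)) ->
     K (fun h => exists gs, in_prod As gs /\ h = F gs)).

Definition DD_of (As : list gset) : gset -> Prop := fun D =>
  coherentD D /\
  exists gs, in_prod As gs /\ ~ has_zero (Ecl (lset gs)) /\
             (forall h, Ecl (lset gs) h -> D h).

Definition frakD_K (K : gset -> Prop) : (gset -> Prop) -> Prop := fun DD =>
  exists As : list gset, As <> [] /\ Forall K As /\ DD = DD_of As.

Definition downwards_closed (frakD : (gset -> Prop) -> Prop) : Prop :=
  forall DD1 DD2, frakD DD1 -> frakD DD2 ->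
    exists DD, frakD DD /\ forall D, DD D -> DD1 D /\ DD2 D.

Definition K_of (frakD : (gset -> Prop) -> Prop) : gset -> Prop := fun B =>
  exists DD, frakD DD /\ forall D, DD D -> exists g, B g /\ D g.

End Gambles.

(* A member of K_{frak D_K} meets E({g_1,...,g_n}) for every consistent selection
   <g_1,...,g_n> from some A_1,...,A_n in K.  So each selection g has an element
   f_g of posi({g_1,...,g_n}) lying below either a member of B or the zero gamble
   (the latter when 0 is in E({g_1,...,g_n})).  Applying K_Add to g |-> f_g,
   K_Dom to raise each f_g to that gamble, and K_0 to drop the zeros puts B in K.
   With B empty the same argument shows that some selection is consistent, since
   otherwise K_Add and K_Dom would produce the empty set. *)

From Pilot Require Import Defs.
From Stdlib Require Import Reals List Lra Classical ClassicalEpsilon.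
Import ListNotations.
Open Scope R_scope.
Set Implicit Arguments.

Lemma guarded_choice (A B : Type) (b0 : B) (P : A -> Prop) (R : A -> B -> Prop) :
  (forall x, P x -> exists y, R x y) -> exists f : A -> B, forall x, P x -> R x (f x).
Proof.
  intro HR. apply (choice (fun x y => P x -> R x y)). intro x.
  destruct (classic (P x)) as [Hx|Hx].
  - destruct (HR x Hx) as [y Hy]. exists y. auto.
  - exists b0. contradiction.
Qed.

Section Gambles.
Variable Omega : Type.

Lemma lincomb_bounded (l : list (R * gamble Omega)) :
  exists M, forall w, Rabs (lincomb l w) <= M.
Proof.
  induction l as [|[a g] l [M HM]]; simpl.
  - exists 0. intro. rewrite Rabs_R0. lra.
  - destruct (gbounded g) as [Mg HMg]. exists (Rabs a * Mg + M). intro w.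
    eapply Rle_trans; [apply Rabs_triang|]. rewrite Rabs_mult.
    apply Rplus_le_compat; [|apply HM].
    apply Rmult_le_compat_l; [apply Rabs_pos|apply HMg].
Qed.

Definition lincomb_gamble (l : list (R * gamble Omega)) : gamble Omega :=
  Gamble (lincomb l) (lincomb_bounded l).

Lemma const_bounded (c : R) : exists M, forall w : Omega, Rabs ((fun _ => c) w) <= M.
Proof. exists (Rabs c). intro. lra. Qed.

Definition const_gamble (c : R) : gamble Omega := Gamble (fun _ => c) (const_bounded c).

Lemma is_zero_const0 : is_zero (const_gamble 0).
Proof. intro. reflexivity. Qed.

Lemma gpos_not_zero (h : gamble Omega) : gpos h -> ~ is_zero h.
Proof. intros [_ [w Hw]] Hz. exact (Hw (Hz w)). Qed.

Lemma lincomb_scale lam (l : list (R * gamble Omega)) w :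
  lincomb (map (fun p => (lam * fst p, snd p)) l) w = lam * lincomb l w.
Proof. induction l as [|p l IH]; simpl; [ring|]. rewrite IH. ring. Qed.

Lemma lincomb_app (l1 l2 : list (R * gamble Omega)) w :
  lincomb (l1 ++ l2) w = lincomb l1 w + lincomb l2 w.
Proof. induction l1 as [|p l1 IH]; simpl; [ring|]. rewrite IH. ring. Qed.

Lemma posi_incl (E : gset Omega) h : E h -> posi E h.
Proof.
  intro Hh. exists [(1, h)]. split; [discriminate|]. split.
  - constructor; [split; simpl; [lra|exact Hh]|constructor].
  - intro w. simpl. ring.
Qed.

Lemma Ecl_mono (E1 E2 : gset Omega) :
  (forall h, E1 h -> E2 h) -> forall h, Ecl E1 h -> Ecl E2 h.
Proof.
  intros HE h [l [Hne [HF Hh]]]. exists l. split; [exact Hne|]. split; [|exact Hh].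
  eapply Forall_impl; [|exact HF]. intros p [Hp [Hq|Hq]]; auto.
Qed.

Lemma Ecl_lset_incl (gs1 gs2 : list (gamble Omega)) :
  incl gs1 gs2 -> forall h, Ecl (lset gs1) h -> Ecl (lset gs2) h.
Proof. intro Hincl. apply Ecl_mono. exact Hincl. Qed.

Lemma Ecl_coherent (E : gset Omega) : ~ has_zero (Ecl E) -> coherentD (Ecl E).
Proof.
  intro Hz. split; [exact Hz|]. split; [|split].
  - intros g Hg. apply posi_incl. right. exact Hg.
  - intros g lam h [l [Hne [HF Hg]]] Hlam Hh.
    exists (map (fun p => (lam * fst p, snd p)) l). split; [|split].
    + destruct l; [congruence|discriminate].
    + apply Forall_map. eapply Forall_impl; [|exact HF].
      intros [a x] [Ha Hx]. split; [exact (Rmult_lt_0_compat _ _ Hlam Ha)|exact Hx].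
    + intro w. rewrite lincomb_scale, Hh, Hg. reflexivity.
  - intros f g h [l1 [Hne1 [HF1 Hf]]] [l2 [_ [HF2 Hg]]] Hh.
    exists (l1 ++ l2). split; [|split].
    + destruct l1; [congruence|discriminate].
    + apply Forall_app. auto.
    + intro w. rewrite lincomb_app, Hh, Hf, Hg. reflexivity.
Qed.

Lemma lincomb_drop_gpos (E : gset Omega) l :
  Forall (fun p => 0 < fst p /\ (E (snd p) \/ gpos (snd p))) l ->
  (exists l1, l1 <> [] /\ Forall (fun p => 0 < fst p /\ E (snd p)) l1 /\
     forall w, lincomb l1 w <= lincomb l w)
  \/ ((forall w, 0 <= lincomb l w) /\ (l <> [] -> exists w, 0 < lincomb l w)).
Proof.
  induction l as [|[a h] l IH]; intro HF.
  - right. split; [intro; simpl; lra|congruence].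
  - inversion HF as [|? ? [Ha Hh] HF']; subst. simpl in Ha, Hh.
    destruct (IH HF') as [[l1 [Hne [Hl1 Hle]]]|[Hnn _]]; destruct Hh as [HE|[Hp [w0 Hw0]]].
    + left. exists ((a, h) :: l1). split; [discriminate|]. split; [constructor; auto|].
      intro w. simpl. specialize (Hle w). lra.
    + left. exists l1. split; [exact Hne|]. split; [exact Hl1|].
      intro w. simpl. specialize (Hle w). specialize (Hp w). nra.
    + left. exists [(a, h)]. split; [discriminate|]. split; [constructor; auto|].
      intro w. simpl. specialize (Hnn w). lra.
    + right. split.
      * intro w. simpl. specialize (Hnn w). specialize (Hp w). nra.
      * intros _. exists w0. simpl. specialize (Hnn w0).
        assert (0 < h w0) by (destruct (Hp w0); [assumption|congruence]). nra.
Qed.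

Lemma Ecl_cases (E : gset Omega) h :
  Ecl E h -> (exists f, posi E f /\ gge h f) \/ gpos h.
Proof.
  intros [l [Hne [HF Hh]]].
  destruct (lincomb_drop_gpos E HF) as [[l1 [Hne1 [HF1 Hle]]]|[Hnn Hpos]].
  - left. exists (lincomb_gamble l1). split.
    + exists l1. auto.
    + intro w. rewrite Hh. apply Hle.
  - right. split.
    + intro w. rewrite Hh. apply Hnn.
    + destruct (Hpos Hne) as [w Hw]. exists w. rewrite Hh. lra.
Qed.

Lemma zero_in_Ecl_dominates (E : gset Omega) :
  has_zero (Ecl E) -> exists f, posi E f /\ gge (const_gamble 0) f.
Proof.
  intros [h [Hh Hz]].
  destruct (Ecl_cases Hh) as [[f [Hf Hle]]|Hpos].
  - exists f. split; [exact Hf|]. intro w. rewrite <- (Hz w). apply Hle.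
  - exfalso. exact (gpos_not_zero Hpos Hz).
Qed.

Lemma DD_of_refine (As As' : list (gset Omega)) :
  (forall gs, Defs.in_prod As gs -> exists gs', Defs.in_prod As' gs' /\ incl gs' gs) ->
  forall D, DD_of As D -> DD_of As' D.
Proof.
  intros Href D [HD [gs [Hgs [Hz Hsub]]]].
  destruct (Href gs Hgs) as [gs' [Hgs' Hincl]].
  split; [exact HD|]. exists gs'. split; [exact Hgs'|]. split.
  - intros [h [Hh Hh0]]. apply Hz. exists h. split; [|exact Hh0].
    exact (Ecl_lset_incl Hincl Hh).
  - intros h Hh. apply Hsub. exact (Ecl_lset_incl Hincl Hh).
Qed.

Lemma DD_of_app (As1 As2 : list (gset Omega)) D :
  DD_of (As1 ++ As2) D -> DD_of As1 D /\ DD_of As2 D.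
Proof.
  intro HD. split; revert D HD; apply DD_of_refine; intros gs Hgs;
    destruct (Forall2_app_inv_l _ _ Hgs) as [gs1 [gs2 [Hgs1 [Hgs2 ->]]]].
  - exists gs1. split; [exact Hgs1|apply incl_appl, incl_refl].
  - exists gs2. split; [exact Hgs2|apply incl_appr, incl_refl].
Qed.

Section CoherentK.
Variable K : gset Omega -> Prop.
Hypothesis HK : coherentK K.

Lemma K_of_dominating_selections (As : list (gset Omega)) (B : gset Omega) :
  As <> [] -> Forall K As ->
  (forall gs, Defs.in_prod As gs ->
     exists f t, posi (lset gs) f /\ gge t f /\ (B t \/ is_zero t)) ->
  K B.
Proof.
  destruct HK as [_ [HK0 [_ [Hsup [Hdom Hadd]]]]].
  intros Hne HAs Hsel.
  set (z := const_gamble 0).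
  destruct (guarded_choice (z, z) (Defs.in_prod As)
    (fun gs p => posi (lset gs) (fst p) /\ gge (snd p) (fst p) /\ (B (snd p) \/ is_zero (snd p))))
    as [P HP].
  { intros gs Hgs. destruct (Hsel gs Hgs) as [f [t Hft]]. exists (f, t). exact Hft. }
  set (A := fun h => exists gs, Defs.in_prod As gs /\ h = fst (P gs)).
  assert (HA : K A) by (apply (Hadd As (fun gs => fst (P gs)) Hne HAs); apply HP).
  destruct (guarded_choice z A (fun h t => gge t h /\ (B t \/ is_zero t))) as [G HG].
  { intros h [gs [Hgs ->]]. exists (snd (P gs)). apply HP, Hgs. }
  pose proof (HK0 _ (Hdom A G HA (fun h Hh => proj1 (HG h Hh)))) as HGA.
  apply (Hsup _ _ HGA). intros t [[h [Hh ->]] Hnz].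
  destruct (proj2 (HG h Hh)) as [HB|Hz]; [exact HB|contradiction].
Qed.

Lemma exists_consistent_selection (As : list (gset Omega)) :
  As <> [] -> Forall K As ->
  exists gs, Defs.in_prod As gs /\ ~ has_zero (Ecl (lset gs)).
Proof.
  intros Hne HAs. apply NNPP. intro Hnone.
  apply (proj1 HK). apply (K_of_dominating_selections _ Hne HAs).
  intros gs Hgs.
  assert (Hz : has_zero (Ecl (lset gs))) by (apply NNPP; intro; eauto).
  destruct (zero_in_Ecl_dominates Hz) as [f [Hf Hle]].
  exists f, (const_gamble 0). auto using is_zero_const0.
Qed.

Lemma DD_of_coherent_nonempty (As : list (gset Omega)) :
  As <> [] -> Forall K As -> exists D, DD_of As D.
Proof.
  intros Hne HAs. destruct (exists_consistent_selection Hne HAs) as [gs [Hgs Hz]].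
  exists (Ecl (lset gs)). split; [exact (Ecl_coherent Hz)|]. exists gs. auto.
Qed.

Lemma K_sub_K_of (B : gset Omega) : K B -> K_of (frakD_K K) B.
Proof.
  intro HB. exists (DD_of [B]). split.
  - exists [B]. split; [discriminate|]. split; [constructor; auto|reflexivity].
  - intros D [_ [gs [Hgs [_ Hsub]]]].
    inversion Hgs as [|A g As' gs' HBg Hnil]; subst. inversion Hnil; subst.
    exists g. split; [exact HBg|]. apply Hsub, posi_incl. left. left. reflexivity.
Qed.

Lemma K_of_sub_K (B : gset Omega) : K_of (frakD_K K) B -> K B.
Proof.
  destruct HK as [_ [_ [Hpos [Hsup _]]]].
  intros [DD [[As [Hne [HAs ->]]] HB]].
  destruct (classic (exists b, B b /\ gpos b)) as [[b [Hb Hbpos]]|Hnopos].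
  - apply (Hsup _ _ (Hpos b Hbpos)). intros g ->. exact Hb.
  - apply (K_of_dominating_selections _ Hne HAs). intros gs Hgs.
    destruct (classic (has_zero (Ecl (lset gs)))) as [Hz|Hz].
    + destruct (zero_in_Ecl_dominates Hz) as [f [Hf Hle]].
      exists f, (const_gamble 0). auto using is_zero_const0.
    + assert (HD : DD_of As (Ecl (lset gs))) by (split; [apply Ecl_coherent|exists gs]; auto).
      destruct (HB _ HD) as [b [Hb Hbe]].
      destruct (Ecl_cases Hbe) as [[f [Hf Hle]]|Hbpos].
      * exists f, b. auto.
      * exfalso. eauto.
Qed.

End CoherentK.
End Gambles.

Theorem mainTheorem9 (Omega : Type) (w0 : Omega)
  (K : gset Omega -> Prop) (HK : coherentK K) :
  (exists DD, frakD_K K DD) /\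
  (forall DD, frakD_K K DD ->
     (exists D, DD D) /\ (forall D, DD D -> coherentD D)) /\
  (forall As1 As2 : list (gset Omega),
     As1 <> [] -> Forall K As1 -> As2 <> [] -> Forall K As2 ->
     forall D, DD_of (As1 ++ As2) D -> DD_of As1 D /\ DD_of As2 D) /\
  downwards_closed (frakD_K K) /\
  (forall B : gset Omega, K B <-> K_of (frakD_K K) B).
Proof.
  assert (Hone : gpos (const_gamble Omega 1)) by (split; [intro; simpl; lra|exists w0; simpl; lra]).
  pose proof HK as [_ [_ [Hpos _]]].
  split; [|split; [|split; [|split]]].
  - exists (DD_of [fun h => h = const_gamble Omega 1]), [fun h => h = const_gamble Omega 1].
    split; [discriminate|]. split; [|reflexivity].
    constructor; [exact (Hpos _ Hone)|constructor].
  - intros DD [As [Hne [HAs ->]]]. split.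
    + exact (DD_of_coherent_nonempty HK Hne HAs).
    + intros D [HD _]. exact HD.
  - intros As1 As2 _ _ _ _. apply DD_of_app.
  - intros DD1 DD2 [As1 [Hne1 [HAs1 ->]]] [As2 [_ [HAs2 ->]]].
    exists (DD_of (As1 ++ As2)). split; [|apply DD_of_app].
    exists (As1 ++ As2). split; [destruct As1; [congruence|discriminate]|].
    split; [apply Forall_app; auto|reflexivity].
  - intro B. split; [apply K_sub_K_of|apply K_of_sub_K]; exact HK.
Qed.
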